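(* Let $X$ and $Y$ be arbitrary (completely regular) spaces and $F\colon\mathcal{K}(X)\to\mathcal{K}(Y)$ a map satisfying: (1) if $K,L\in\mathcal{K}(X)$ and $K\subset L$, then $F(K)\subset F(L)$; $(2)_c$ for each countable $L\in\mathcal{K}(Y)$ there is $K\in\mathcal{K}(X)$ with $L\subset F(K)$; $(3)_c$ if $U\subset X$ and $V\subset Y$ are non-empty open sets such that for each countable compact $L\subset V$ there is a compact $K\subset U$ with $L\subset F(K)$, then for any open cover $\mathcal{W}$ of $U$ and any $y\in V$ there exist a finite $\mathcal{E}\subset\mathcal{W}$ and a neighborhood $V_y$ of $y$ such that every countable compact $L\subset V_y$ satisfies $L\subset F(K)$ for some compact $K\subset\bigcup\mathcal{E}$. Then $F$ is monotone set tri-quotient.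
   Context: $\mathcal{K}(X)$ is the set of compact subsets of $X$, $\mathcal{T}(X)$ the topology of $X$. $F\colon\mathcal{K}(X)\to 2^Y$ is monotone if $K\subset L$ implies $F(K)\subset F(L)$; it is set tri-quotient if there is $s\colon\mathcal{T}(X)\to\mathcal{T}(Y)$ with: (str1) $s(U)\subset\bigcup\{F(K):K\in\mathcal{K}(X),K\subset U\}$; (str2) $s(X)=Y$; (str3) $U\subset V\Rightarrow s(U)\subset s(V)$; (str4) if $y\in s(U)$ and $\mathcal{W}$ is a cover of $\bigcup\{K\in F^{-1}(y):K\subset U\}$ by open subsets of $X$, then $y\in s(\bigcup\mathcal{E})$ for some finite $\mathcal{E}\subset\mathcal{W}$, where $F^{-1}(y)=\{K\in\mathcal{K}(X):y\in F(K)\}$. *)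

From mathcomp Require Import all_boot all_classical all_reals all_analysis.
Set Implicit Arguments. Unset Strict Implicit. Unset Printing Implicit Defensive.
Local Open Scope classical_set_scope.

(* A map F : K(X) -> 2^Y is represented by F : set X -> set Y; only its
   values on compact sets matter. *)

Definition monotone_on_compacts (X : topologicalType) (Y : Type)
    (F : set X -> set Y) : Prop :=
  forall K L : set X, compact K -> compact L -> K `<=` L -> F K `<=` F L.

(* Set tri-quotient maps; s : T(X) -> T(Y) is represented by
   s : set X -> set Y, constrained on open sets only. *)
Definition set_tri_quotient (X Y : topologicalType) (F : set X -> set Y) : Prop :=
  exists s : set X -> set Y,
    (forall U : set X, open U -> open (s U)) /\
    (* (str1) *)
    (forall U : set X, open U ->
       s U `<=` \bigcup_(K in [set K : set X | compact K /\ K `<=` U]) F K) /\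
    (* (str2) *)
    s setT = setT /\
    (* (str3) *)
    (forall U V : set X, open U -> open V -> U `<=` V -> s U `<=` s V) /\
    (* (str4) *)
    (forall (U : set X) (y : Y) (W : set (set X)), open U -> s U y ->
       (forall A, W A -> open A) ->
       \bigcup_(K in [set K : set X | compact K /\ K `<=` U /\ F K y]) K
         `<=` \bigcup_(A in W) A ->
       exists E : set (set X), [/\ finite_set E, E `<=` W &
         s (\bigcup_(A in E) A) y]).

From mathcomp Require Import all_boot all_classical all_reals all_analysis.
Set Implicit Arguments. Unset Strict Implicit. Unset Printing Implicit Defensive.
Local Open Scope classical_set_scope.

(* The witness is s(U) := the union of the open V all of whose countable
   compact subsets are covered by some F(K), K compact in U.  Then (str1)
   comes from singletons, (str2) is (2)_c and (str3) is immediate.  For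
   (str4), adding y to a countable compact L forces every covering K to lie
   in the union of the compacts K' in U with y in F(K'), hence in the union
   of the cover W; so (3)_c applies to U intersected with the union of W. *)

Lemma countable_setU (T : Type) (A B : set T) :
  countable A -> countable B -> countable (A `|` B).
Proof.
move=> cA cB.
apply: (@sub_countable _ _ _ (\bigcup_(b in [set: bool]) (if b then A else B))).
  by apply: subset_card_le => x [Ax|Bx]; [exists true|exists false].
apply: bigcup_countable; first exact: countableP.
by case.
Qed.

Section countably_covered.
Variables (X Y : topologicalType) (F : set X -> set Y).

Definition countably_covered (U : set X) (V : set Y) : Prop :=
  forall L : set Y, countable L -> compact L -> L `<=` V ->
    exists K : set X, [/\ compact K, K `<=` U & L `<=` F K].

Definition countably_covered_interior (U : set X) : set Y :=
  [set y | exists V, [/\ open V, V y & countably_covered U V]].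

Lemma countably_covered_sub (U U' : set X) (V V' : set Y) :
  U `<=` U' -> V' `<=` V -> countably_covered U V -> countably_covered U' V'.
Proof.
move=> UU' V'V cUV L cL kL LV'.
have [K [kK KU LK]] := cUV L cL kL (subset_trans LV' V'V).
by exists K; split => //; apply: subset_trans UU'.
Qed.

Lemma open_countably_covered_interior (U : set X) :
  open (countably_covered_interior U).
Proof.
have -> : countably_covered_interior U =
    \bigcup_(V in [set V | open V /\ countably_covered U V]) V.
  apply/seteqP; split => y; first by move=> [V [oV Vy cUV]]; exists V.
  by move=> [V [oV cUV] Vy]; exists V.
by apply: bigcup_open => V [].
Qed.

Lemma countably_covered_interior_sub_images (U : set X) :
  countably_covered_interior U `<=`
    \bigcup_(K in [set K : set X | compact K /\ K `<=` U]) F K.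
Proof.
move=> y [V [_ Vy cUV]].
have yV : [set y] `<=` V by rewrite sub1set inE.
have [K [kK KU yK]] := cUV [set y] (countable1 y) (@compact_set1 Y y) yV.
by exists K => //; apply: yK.
Qed.

Lemma countably_covered_interiorS (U U' : set X) :
  U `<=` U' -> countably_covered_interior U `<=` countably_covered_interior U'.
Proof.
move=> UU' y [V [oV Vy cUV]]; exists V; split => //.
exact: countably_covered_sub cUV.
Qed.

Lemma countably_covered_fiber (U : set X) (V : set Y) (y : Y) :
  V y -> countably_covered U V ->
  countably_covered
    (U `&` \bigcup_(K in [set K : set X | compact K /\ K `<=` U /\ F K y]) K) V.
Proof.
move=> Vy cUV L cL kL LV.
have LyV : L `|` [set y] `<=` V by rewrite subUset sub1set inE.
have [K [kK KU LyK]] := cUV (L `|` [set y]) (countable_setU cL (countable1 y))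
  (compactU kL (@compact_set1 Y y)) LyV.
exists K; split => //; last by move=> z Lz; apply: LyK; left.
move=> x Kx; split; first exact: KU.
by exists K => //; split => //; split => //; apply: LyK; right.
Qed.

Lemma countably_covered_interior_setT :
  (forall L : set Y, compact L -> countable L ->
     exists K : set X, compact K /\ L `<=` F K) ->
  countably_covered_interior setT = setT.
Proof.
move=> cover_countable; apply/seteqP; split => // y _.
exists setT; split => //; first exact: openT.
move=> L cL kL _; have [K [kK LK]] := cover_countable L kL cL.
by exists K.
Qed.

Hypothesis countably_covered_finite_subcover :
  forall (U : set X) (V : set Y),
    open U -> U !=set0 -> open V -> V !=set0 -> countably_covered U V ->
    forall W : set (set X), (forall A, W A -> open A) ->
    U `<=` \bigcup_(A in W) A ->
    forall y : Y, V y ->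
    exists E : set (set X), exists Vy : set Y,
      [/\ finite_set E, E `<=` W, nbhs y Vy &
        countably_covered (\bigcup_(A in E) A) Vy].

Lemma countably_covered_interior_finite_subcover (U : set X) (y : Y)
    (W : set (set X)) :
  open U -> countably_covered_interior U y -> (forall A, W A -> open A) ->
  \bigcup_(K in [set K : set X | compact K /\ K `<=` U /\ F K y]) K
    `<=` \bigcup_(A in W) A ->
  exists E : set (set X), [/\ finite_set E, E `<=` W &
    countably_covered_interior (\bigcup_(A in E) A) y].
Proof.
move=> oU [V [oV Vy cUV]] oW fiberW.
pose O := U `&` \bigcup_(A in W) A.
have cOV : countably_covered O V.
  apply: countably_covered_sub (countably_covered_fiber Vy cUV) => //.
  by move=> x [Ux /fiberW Wx].
have [[x Ox]|O0] := pselect (O !=set0); last first.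
  exists set0; split; [exact: finite_set0|exact: sub0set|].
  exists V; split => //; apply: countably_covered_sub cOV => // x Ox.
  by case: O0; exists x.
have oO : open O by apply: openI => //; apply: bigcup_open.
have [E [Vy' [fE EW nVy' cEVy']]] := countably_covered_finite_subcover
  oO (ex_intro _ x Ox) oV (ex_intro _ y Vy) cOV oW (@subIsetr _ _ _) Vy.
exists E; split => //; exists Vy'°; split.
- exact: open_interior.
- exact: nbhs_singleton (nbhs_interior nVy').
- exact: countably_covered_sub (@subset_refl _ _) (@interior_subset _ _) cEVy'.
Qed.

End countably_covered.

Theorem proposition2p4 (X Y : topologicalType)
  (hX : completely_regular_space X) (hXs : hausdorff_space X)
  (hY : completely_regular_space Y) (hYs : hausdorff_space Y)
  (F : set X -> set Y)
  (hFK : forall K : set X, compact K -> compact (F K))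
  (h1 : forall K L : set X, compact K -> compact L -> K `<=` L -> F K `<=` F L)
  (h2 : forall L : set Y, compact L -> countable L ->
          exists K : set X, compact K /\ L `<=` F K)
  (h3 : forall (U : set X) (V : set Y),
          open U -> U !=set0 -> open V -> V !=set0 ->
          (forall L : set Y, countable L -> compact L -> L `<=` V ->
             exists K : set X, [/\ compact K, K `<=` U & L `<=` F K]) ->
          forall W : set (set X), (forall A, W A -> open A) ->
          U `<=` \bigcup_(A in W) A ->
          forall y : Y, V y ->
          exists E : set (set X), exists Vy : set Y,
            [/\ finite_set E, E `<=` W, nbhs y Vy &
              forall L : set Y, countable L -> compact L -> L `<=` Vy ->
                exists K : set X,
                  [/\ compact K, K `<=` \bigcup_(A in E) A & L `<=` F K]]) :
  monotone_on_compacts F /\ set_tri_quotient F.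
Proof.
split; first exact: h1.
exists (countably_covered_interior F); split.
  by move=> U _; exact: open_countably_covered_interior.
split; first by move=> U _; exact: countably_covered_interior_sub_images.
split; first exact: countably_covered_interior_setT.
split; first by move=> U V _ _; exact: countably_covered_interiorS.
by move=> U y W oU; exact: countably_covered_interior_finite_subcover.
Qed.
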